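(* Let $\mathcal A$ be a finite alphabet and let $W$ be a finite nonempty set of nonempty words over $\mathcal A$ which are pairwise anagrams (all words of $W$ have the same Parikh vector, i.e. each letter occurs the same number of times in each of them). Let $\psi$ be a morphism on $\mathcal A$ such that for every $a\in\mathcal A$, $\psi(a)$ is a nonempty concatenation of words from $W$, and suppose $\psi$ admits an iterative fixed point. Then the ratio $d=|\psi(w)|/|w|$ is the same for all $w\in W$, and every iterative fixed point of $\psi$ is $d$-automatic.
   Context: An iterative fixed point of a morphism $\psi$ is the infinite word $\lim_{n\to\infty}\psi^n(a)$ for a letter $a$ such that $\psi(a)$ begins with $a$ and $|\psi^n(a)|\to\infty$. For an integer $d\ge 2$, a sequence is $d$-automatic if it is the image under a letter-to-letter map of a fixed point of a morphism all of whose letter-images have length $d$. *)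

From mathcomp Require Import all_boot.
Set Implicit Arguments. Unset Strict Implicit. Unset Printing Implicit Defensive.

Definition mimage (A : Type) (psi : A -> seq A) (w : seq A) : seq A :=
  flatten (map psi w).

Definition miter (A : Type) (psi : A -> seq A) (n : nat) (w : seq A) : seq A :=
  iter n (mimage psi) w.

(* x : nat -> A is the iterative fixed point lim psi^n(a) for the letter a:
   psi(a) begins with a, |psi^n(a)| -> oo, and every psi^n(a) is a prefix of x. *)
Definition is_iter_fixed_point_from (A : Type) (psi : A -> seq A) (a : A)
    (x : nat -> A) : Prop :=
  (exists s, psi a = a :: s) /\
  (forall N, exists n, N < size (miter psi n [:: a])) /\
  (forall n i, i < size (miter psi n [:: a]) -> x i = nth a (miter psi n [:: a]) i).

Definition is_iter_fixed_point (A : Type) (psi : A -> seq A) (x : nat -> A) : Prop :=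
  exists a, is_iter_fixed_point_from psi a x.

Definition admits_iter_fixed_point (A : Type) (psi : A -> seq A) : Prop :=
  exists x, is_iter_fixed_point psi x.

(* d-automatic sequence (d >= 2): image under a letter-to-letter map of an
   iterative fixed point of a d-uniform morphism on a finite alphabet. *)
Definition automatic (A : Type) (d : nat) (x : nat -> A) : Prop :=
  2 <= d /\
  exists (B : finType) (phi : B -> seq B) (tau : B -> A) (y : nat -> B),
    (forall b, size (phi b) = d) /\ is_iter_fixed_point phi y /\
    (forall i, x i = tau (y i)).

Definition concat_of (A : eqType) (W : seq (seq A)) (u : seq A) : Prop :=
  exists ws : seq (seq A), ws != [::] /\ all (fun w => w \in W) ws /\ u = flatten ws.

From mathcomp Require Import all_boot.
From mathcomp Require Import zify.
Set Implicit Arguments. Unset Strict Implicit. Unset Printing Implicit Defensive.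

(* All words of W are anagrams, so they share a length m > 0, and
   since |psi(w)| only depends on the Parikh vector of w, they also share the
   image length d*m, where d is the number of W-words in psi(w0).  Every
   psi^n(a) with n >= 1 is a concatenation of W-words, hence x is cut into
   consecutive blocks of length m, each a word of W, and psi maps the q-th
   block of x onto the stretch of x of length d*m starting at d*q*m.  Growth
   of psi^n(a) forces d >= 2.
   Such a "block substitution" makes x d-automatic: over the finite alphabet
   of pairs (block of length m, offset inside it), the letter y_i describing
   position i is sent to the d letters y_(d*i), ..., y_(d*i+d-1); this
   d-uniform morphism has y as its fixed point, and x is the projection
   reading the letter at the offset. *)

Lemma mimage_cat (A : Type) (psi : A -> seq A) (u v : seq A) :
  mimage psi (u ++ v) = mimage psi u ++ mimage psi v.
Proof. by rewrite /mimage map_cat flatten_cat. Qed.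

Lemma mimage_flatten (A : Type) (psi : A -> seq A) (ws : seq (seq A)) :
  mimage psi (flatten ws) = flatten (map (mimage psi) ws).
Proof. by elim: ws => [|w ws IH] //=; rewrite mimage_cat IH. Qed.

Lemma size_mimage_perm (A : eqType) (psi : A -> seq A) (w1 w2 : seq A) :
  perm_eq w1 w2 -> size (mimage psi w1) = size (mimage psi w2).
Proof.
move=> h; rewrite /mimage !size_flatten /shape -!map_comp.
by apply: perm_sumn; apply: perm_map.
Qed.

Lemma size_flatten_uniform (T : Type) (k : nat) (ws : seq (seq T)) :
  all (fun w => size w == k) ws -> size (flatten ws) = size ws * k.
Proof.
by elim: ws => [|w ws IH] //= /andP[/eqP hw /IH hws]; rewrite size_cat hw hws.
Qed.

Lemma nth_flatten_uniform (T : Type) (x0 : T) (k : nat) (ws : seq (seq T)) q j :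
  all (fun w => size w == k) ws -> q < size ws -> j < k ->
  nth x0 (flatten ws) (q * k + j) = nth x0 (nth [::] ws q) j.
Proof.
elim: ws q => [|w ws IH] // [|q] /= /andP[/eqP hw hws] hq hj.
  by rewrite nth_cat hw hj.
by rewrite nth_cat hw mulSn -addnA ltnNge leq_addr /= addKn IH.
Qed.

Lemma iter_fixed_point_long (A : Type) (psi : A -> seq A) (a : A) (x : nat -> A) N :
  is_iter_fixed_point_from psi a x -> exists n, N < size (miter psi n.+1 [:: a]).
Proof.
move=> [[s hs] [hgrow _]]; have [[|n] hn] := hgrow N; last by exists n.
by exists 0; move: hn; rewrite /miter /= /mimage /= cats0 hs /=; lia.
Qed.

Lemma iter_fixed_point_factor (A : Type) (psi : A -> seq A) (a : A) (x : nat -> A) d :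
  (forall n, size (miter psi n.+2 [:: a]) = d * size (miter psi n.+1 [:: a])) ->
  is_iter_fixed_point_from psi a x -> 1 < d.
Proof.
move=> hstep hfix; rewrite ltnNge; apply/negP => hd1.
pose L := size (miter psi 1 [:: a]).
have hbound : forall n, size (miter psi n.+1 [:: a]) <= L.
  elim=> [//|n IH]; rewrite hstep.
  by apply: leq_trans IH; rewrite -[leqRHS]mul1n leq_mul2r hd1 orbT.
have [n hn] := iter_fixed_point_long L hfix.
by move: (hbound n); rewrite leqNgt hn.
Qed.

(* A sequence y with phi (y i) = y(d*i) ... y(d*i+d-1) and d >= 2 is the
   iterative fixed point of phi from y 0: phi^n(y 0) = y(0) ... y(d^n - 1). *)
Lemma uniform_iter_fixed_point (B : Type) (phi : B -> seq B) (y : nat -> B) d :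
  1 < d -> (forall i, phi (y i) = map y (iota (d * i) d)) ->
  is_iter_fixed_point_from phi (y 0) y.
Proof.
move=> hd hphi.
have hiter : forall n, miter phi n [:: y 0] = map y (iota 0 (d ^ n)).
  elim=> [|n IH]; first by rewrite expn0.
  rewrite [miter _ _ _]/= -/(miter phi n [:: y 0]) IH /mimage -map_comp.
  rewrite (eq_map (g := fun i => map y (iota (d * i) d))) // expnS mulnC.
  elim: (d ^ n) => [|N IHN]; first by rewrite mul0n.
  by rewrite -addn1 iotaD map_cat flatten_cat IHN /= cats0 mulnDl mul1n iotaD
    map_cat mulnC.
split; first by exists (map y (iota 1 d.-1)); rewrite hphi muln0 -(ltn_predK hd).
split; first by move=> N; exists N; rewrite hiter size_map size_iota ltn_expl.
move=> n i; rewrite hiter size_map size_iota => hi.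
by rewrite (nth_map 0) ?size_iota // nth_iota.
Qed.

Definition block (A : Type) (x : nat -> A) (m q : nat) : m.-tuple A :=
  [tuple x (q * m + j) | j < m].

Lemma block_substitution_automatic (A : finType) (x : nat -> A) (m d : nat)
    (G : m.-tuple A -> seq A) (a : A) :
  0 < m -> 1 < d ->
  (forall q p, p < d * m -> x (d * q * m + p) = nth a (G (block x m q)) p) ->
  automatic d x.
Proof.
move=> m_gt0 hd hG.
pose B := (m.-tuple A * 'I_m)%type.
pose pos (i : nat) : 'I_m := Ordinal (ltn_pmod i m_gt0).
pose y (i : nat) : B := (block x m (i %/ m), pos i).
pose phi (b : B) : seq B :=
  [seq (block (nth a (G b.1)) m ((d * b.2 + k) %/ m), pos (d * b.2 + k))
  | k <- iota 0 d].
have hphi : forall i, phi (y i) = map y (iota (d * i) d).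
  move=> i; have -> : iota (d * i) d = map (addn (d * i)) (iota 0 d).
    by rewrite -iotaDl addn0.
  rewrite /phi /= -map_comp.
  apply/eq_in_map => k; rewrite mem_iota /= add0n => hk.
  set t := d * (i %% m) + k.
  have ht : t < d * m.
    have : d * (i %% m).+1 <= d * m by rewrite leq_mul2l ltn_pmod ?orbT.
    by rewrite mulnS /t; lia.
  have htm : t %/ m < d by rewrite ltn_divLR.
  have hdi : d * i + k = d * (i %/ m) * m + t.
    by rewrite {1}(divn_eq i m) mulnDr mulnA addnA.
  rewrite /y hdi divnMDl //; congr pair; last by apply: val_inj; rewrite /= modnMDl.
  apply: eq_from_tnth => j; rewrite !tnth_mktuple mulnDl -addnA hG //.
  have : (t %/ m).+1 * m <= d * m by rewrite leq_mul2r htm orbT.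
  by have := ltn_ord j; rewrite mulSn; lia.
split=> //; exists B, phi, (fun b => tnth b.1 b.2), y; split.
  by move=> b; rewrite size_map size_iota.
split; first by exists (y 0); exact: uniform_iter_fixed_point hd hphi.
by move=> i; rewrite tnth_mktuple /= -divn_eq.
Qed.

Definition W_concat (A : eqType) (W : seq (seq A)) (u : seq A) : Prop :=
  exists2 ws : seq (seq A), all (fun w => w \in W) ws & u = flatten ws.

Section AnagramMorphism.

Variables (A : eqType) (W : seq (seq A)) (psi : A -> seq A) (m d : nat).
Hypothesis size_W : forall w, w \in W -> size w = m.
Hypothesis size_mimage_W : forall w, w \in W -> size (mimage psi w) = d * m.
Hypothesis psi_concat : forall c, concat_of W (psi c).

Lemma W_concat_uniform (ws : seq (seq A)) :
  all (fun w => w \in W) ws -> all (fun w => size w == m) ws.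
Proof. by move=> hws; apply/allP => w /(allP hws) /size_W ->. Qed.

Lemma W_concat_mimage_uniform (ws : seq (seq A)) :
  all (fun w => w \in W) ws -> all (fun w => size w == d * m) (map (mimage psi) ws).
Proof.
by move=> hws; rewrite all_map; apply/allP => w /(allP hws) hw; rewrite /= size_mimage_W.
Qed.

Lemma W_concat_mimage (u : seq A) : W_concat W (mimage psi u).
Proof.
elim: u => [|c u [ws hws eu]]; first by exists [::].
have [vs [_ [hvs epsi]]] := psi_concat c.
exists (vs ++ ws); first by rewrite all_cat hvs.
by rewrite -cat1s mimage_cat eu flatten_cat /mimage /= cats0 epsi.
Qed.

Lemma size_mimage_W_concat (u : seq A) :
  W_concat W u -> size (mimage psi u) = d * size u.
Proof.
move=> [ws hws ->]; rewrite mimage_flatten.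
rewrite (size_flatten_uniform (W_concat_mimage_uniform hws)).
by rewrite (size_flatten_uniform (W_concat_uniform hws)) size_map mulnCA mulnC.
Qed.

Lemma fixed_point_blocks (a : A) (x : nat -> A) q p :
  is_iter_fixed_point_from psi a x -> p < d * m ->
  x (d * q * m + p) = nth a (mimage psi (block x m q)) p.
Proof.
move=> hfix hp.
have m_gt0 : 0 < m by rewrite lt0n; apply: contraTneq hp => ->; rewrite muln0.
have [n hn] := iter_fixed_point_long (q.+1 * m) hfix.
have [_ [_ hx]] := hfix; have x_on_u := hx n.+1.
have x_on_image : forall i, i < size (mimage psi (miter psi n.+1 [:: a])) ->
    x i = nth a (mimage psi (miter psi n.+1 [:: a])) i := hx n.+2.
have u_concat : W_concat W (miter psi n.+1 [:: a]) := W_concat_mimage _.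
move: (miter psi n.+1 [:: a]) hn x_on_u x_on_image u_concat
  => u hn x_on_u x_on_image [ws hws eu].
have hsu : size u = size ws * m.
  by rewrite eu (size_flatten_uniform (W_concat_uniform hws)).
have hq : q < size ws by move: hn; rewrite hsu ltn_pmul2r // => /ltnW.
have hqm : q * m + m <= size u by rewrite hsu addnC -mulSn leq_mul2r hq orbT.
have hblock : block x m q = nth [::] ws q :> seq A.
  apply: (@eq_from_nth _ a); first by rewrite size_tuple size_W ?(allP hws) ?mem_nth.
  move=> j; rewrite size_tuple => hj; rewrite -[j]/(nat_of_ord (Ordinal hj)).
  rewrite nth_mktuple x_on_u; last by rewrite /=; lia.
  by rewrite eu nth_flatten_uniform ?W_concat_uniform.
have hsv : size (mimage psi u) = d * size u.
  by apply: size_mimage_W_concat; exists ws.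
rewrite hblock x_on_image; last by rewrite hsv; nia.
rewrite eu mimage_flatten -mulnA mulnCA nth_flatten_uniform ?size_map //.
  by rewrite (nth_map [::]).
exact: W_concat_mimage_uniform.
Qed.

End AnagramMorphism.

Theorem theorem4p1 (A : finType) (W : seq (seq A)) (psi : A -> seq A) :
  W != [::] ->
  (forall w, w \in W -> w != [::]) ->
  (forall w1 w2, w1 \in W -> w2 \in W -> perm_eq w1 w2) ->
  (forall a, concat_of W (psi a)) ->
  admits_iter_fixed_point psi ->
  exists d : nat,
    (forall w, w \in W -> size (mimage psi w) = d * size w) /\
    (forall x, is_iter_fixed_point psi x -> automatic d x).
Proof.
case: W => [|w0 W'] // _; set W := w0 :: W' => hne hperm hc _.
have hw0 : w0 \in W by rewrite inE eqxx.
pose m := size w0.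
have size_W : forall w, w \in W -> size w = m.
  by move=> w hw; apply/perm_size/hperm.
have m_gt0 : 0 < m by rewrite lt0n size_eq0 hne.
have [ws0 hws0 e0] := W_concat_mimage hc w0.
pose d := size ws0.
have size_mimage_W : forall w, w \in W -> size (mimage psi w) = d * m.
  move=> w hw; rewrite (size_mimage_perm psi (hperm w w0 hw hw0)) e0.
  by rewrite (size_flatten_uniform (W_concat_uniform size_W hws0)) mulnC.
exists d; split; first by move=> w hw; rewrite size_mimage_W ?size_W.
move=> x [a hfix].
have hd : 1 < d.
  apply: (iter_fixed_point_factor _ hfix) => n.
  exact: (size_mimage_W_concat size_W size_mimage_W
            (W_concat_mimage hc (miter psi n [:: a]))).
apply: (block_substitution_automatic (G := mimage psi) (a := a) m_gt0 hd) => q p.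
exact: (fixed_point_blocks size_W size_mimage_W hc).
Qed.
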